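(* Let $n=m^2$ where $m>1$ is odd and squarefree. Then $C_{S(n)^*}=9$.
   Context: For a natural number $n$, $\mathbb Z_n=\mathbb Z/n\mathbb Z$, $S(n)=\{x^2:x\in\mathbb Z_n\}$, $S(n)^*=S(n)\setminus\{0\}$. For $A\subseteq\mathbb Z_n$, a sequence $(y_1,\dots,y_t)$ ($t\ge1$) in $\mathbb Z_n$ is an $A$-weighted zero-sum sequence if there exist $a_1,\dots,a_t\in A$ with $\sum a_iy_i=0$. $C_A(n)$ is the least positive integer $t$ such that every sequence of length $t$ in $\mathbb Z_n$ has a nonempty subsequence of consecutive terms that is an $A$-weighted zero-sum sequence; $C_{S(n)^*}=C_{S(n)^*}(n)$. *)

From mathcomp Require Import all_boot all_algebra.
Unset Printing Implicit Defensive.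
Import GRing.Theory.
Local Open Scope ring_scope.

Definition sqset (n : nat) : pred ('Z_n) := fun a => [exists x : 'Z_n, a == x ^+ 2].
Definition sqset_star (n : nat) : pred 'Z_n := fun a => (a != 0) && sqset n a.

Definition weighted_zero_sum (n : nat) (A : pred 'Z_n) (y : seq 'Z_n) : Prop :=
  (0 < size y)%N /\
  exists a : seq 'Z_n, size a = size y /\ all A a /\
    \sum_(i < size y) a`_i * y`_i = 0.

Definition C_property (n : nat) (A : pred 'Z_n) (t : nat) : Prop :=
  forall y : seq 'Z_n, size y = t ->
    exists z : seq 'Z_n, infix z y /\ weighted_zero_sum n A z.

Definition is_C_constant (n : nat) (A : pred 'Z_n) (c : nat) : Prop :=
  (0 < c)%N /\ C_property n A c /\ forall t, (0 < t)%N -> (t < c)%N -> ~ C_property n A t.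

Definition squarefree (m : nat) : bool :=
  [forall p : 'I_m.+1, prime p ==> ~~ (p * p %| m)%N].

From mathcomp Require Import all_boot all_algebra cyclic finfield.
From mathcomp Require Import ring zify.
Import GRing.Theory.
Set Implicit Arguments. Unset Strict Implicit. Unset Printing Implicit Defensive.

(* Upper bound: let p be a prime divisor of m and read the nine terms as naturals Y_k. If
   three consecutive Y_k are multiples of p, either one of them is a multiple of p^2, or
   the quotients Y_k / p are three units mod p, and any three units mod p admit a zero sum
   with nonzero square weights on two or three consecutive of them; multiplying by p gives
   a zero sum mod p^2. Otherwise the first three units mod p lie within the nine terms, the
   same three-unit fact (weight 1 on the multiples of p in between) gives a zero sum mod p,
   and Hensel's lemma lifts it mod p^2. Scaling the weights by (m/p)^2 yields a zero sum
   mod m^2 whose weights are nonzero squares.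
   Lower bound: choose N with -N a nonresidue mod every prime divisor of m, so that for
   squarefree m, m | x^2 + N y^2 forces m | x and m | y. In m, N m, 1, m, N m, N, m, N m
   each block contains at most one weight of each of the shapes 1, N (or, if it has no
   unit, m, N m), so a zero sum mod m^2 would make one of its square weights vanish. *)

Section PrimeField.
Variable p : nat.
Hypothesis p_pr : prime p.
Hypothesis p_odd : odd p.

Section Squares.
Local Open Scope ring_scope.

Definition Fp_square (x : 'F_p) : bool := [exists y, x == y ^+ 2].

Lemma Fp_unity (x : 'F_p) : x != 0 -> x ^+ p.-1 = 1.
Proof.
move=> x0; have := expf_card x; rewrite card_Fp //.
have -> : x ^+ p = x * x ^+ p.-1 by rewrite -exprS prednK ?prime_gt0.
by move=> xpx; apply: (mulfI x0); rewrite xpx mulr1.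
Qed.

Lemma Fp_prim_root : exists g : 'F_p, (p.-1).-primitive_root g.
Proof.
have p1_gt0 : (0 < p.-1)%N by rewrite -subn1 subn_gt0 prime_gt1.
have units : [seq x <- enum 'F_p | x != 0] = enum (predC1 (0 : 'F_p)).
  by rewrite enumT /enum_mem; apply: eq_filter.
have : has (p.-1).-primitive_root [seq x <- enum 'F_p | x != 0].
  apply: has_prim_root => //; last by rewrite units -cardE cardC1 card_Fp.
    by apply/allP => x; rewrite mem_filter unity_rootE => /andP[/Fp_unity ->].
  by rewrite filter_uniq ?enum_uniq.
by case/hasP=> g _; exists g.
Qed.

Lemma even_pred_p : odd p.-1 = false.
Proof. by move: p_odd (prime_gt0 p_pr); case: p => //= n; case: (odd n). Qed.

Section PrimitiveRoot.
Variable g : 'F_p.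
Hypothesis g_prim : (p.-1).-primitive_root g.

Lemma prim_root_neq0 : g != 0.
Proof.
apply/eqP=> g0; have := prim_expr_order g_prim; rewrite g0 expr0n.
by rewrite -subn1 subn_eq0 leqNgt prime_gt1 // => /eqP; rewrite eq_sym oner_eq0.
Qed.

Lemma Fp_log (x : 'F_p) : x != 0 -> exists i, x = g ^+ i.
Proof. by move/Fp_unity/(prim_rootP g_prim) => [i ->]; exists i. Qed.

Lemma Fp_square_prim_exp i : Fp_square (g ^+ i) = ~~ odd i.
Proof.
apply/existsP/idP => [[y /eqP gi]|even_i]; last first.
  exists (g ^+ i./2); rewrite -exprM muln2 -{1}(odd_double_half i).
  by rewrite (negbTE even_i).
have y0 : y != 0.
  by apply: contra_eq_neq gi => ->; rewrite expr0n expf_neq0 ?prim_root_neq0.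
have [j yj] := Fp_log y0; move/eqP: gi; rewrite yj -exprM.
rewrite (eq_prim_root_expr g_prim) => /eqP ij.
by rewrite -(odd_mod i even_pred_p) ij odd_mod ?even_pred_p // oddM andbF.
Qed.

End PrimitiveRoot.

Lemma Fp_nonsquare_exists : exists x : 'F_p, ~~ Fp_square x.
Proof.
by have [g g_prim] := Fp_prim_root; exists g; rewrite -[g]expr1 Fp_square_prim_exp.
Qed.

Lemma Fp_square_mul (x y : 'F_p) : x != 0 -> y != 0 ->
  ~~ Fp_square x -> ~~ Fp_square y -> Fp_square (x * y).
Proof.
have [g g_prim] := Fp_prim_root.
move=> /(Fp_log g_prim)[i ->] /(Fp_log g_prim)[j ->].
by rewrite -exprD !Fp_square_prim_exp // oddD => /negbNE-> /negbNE->.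
Qed.

Lemma Fp_nonsquare_sqrS : exists2 s : 'F_p, s != 0 & ~~ Fp_square (s ^+ 2 + 1).
Proof.
apply/exists_inP; apply: contraT; rewrite negb_exists_in => /forall_inP sqS.
have all_sq (k : nat) : Fp_square k%:R.
  elim: k => [|k /existsP[s /eqP ks]]; first by apply/existsP; exists 0; rewrite expr0n.
  rewrite -addn1 natrD ks; have [-> | s0] := eqVneq s 0; last exact/negbNE/sqS.
  by apply/existsP; exists 1; rewrite expr0n add0r expr1n.
have [x] := Fp_nonsquare_exists; by rewrite -(natr_Zp x) all_sq.
Qed.

Lemma Fp_nonzero_square (x : 'F_p) :
  Fp_square x -> x != 0 -> exists2 y, y != 0 & x = y ^+ 2.
Proof. by case/existsP=> y /eqP ->; rewrite expf_eq0 /= => y0; exists y. Qed.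

Lemma Fp_three_term (z0 z1 z2 : 'F_p) : z0 != 0 -> z1 != 0 -> z2 != 0 ->
  exists c0 c1 c2, [/\ c0 != 0, c1 != 0, c2 != 0 &
    [\/ c0 ^+ 2 * z0 + c1 ^+ 2 * z1 = 0, c1 ^+ 2 * z1 + c2 ^+ 2 * z2 = 0 |
        c0 ^+ 2 * z0 + c1 ^+ 2 * z1 + c2 ^+ 2 * z2 = 0]].
Proof.
move=> z0_0 z1_0 z2_0; pose w := - z1 / z0; pose w' := - z2 / z1.
have w0 : w != 0 by rewrite mulf_neq0 ?oppr_eq0 ?invr_eq0.
have w'0 : w' != 0 by rewrite mulf_neq0 ?oppr_eq0 ?invr_eq0.
have [/Fp_nonzero_square/(_ w0)[y y0 wy] | nsq_w] := boolP (Fp_square w).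
  exists y, 1, 1; split; rewrite ?oner_neq0 //; constructor 1.
  by rewrite -wy /w expr1n mul1r divfK ?addNr.
have [/Fp_nonzero_square/(_ w'0)[y y0 wy] | nsq_w'] := boolP (Fp_square w').
  exists 1, y, 1; split; rewrite ?oner_neq0 //; constructor 2.
  by rewrite -wy /w' expr1n mul1r divfK ?addNr.
(* With the nonsquare nu = s^2 + 1: z2 = t^2 z0 and w = a^2 nu, so that
   a^2 s^2 z0 + z1 + (a / t)^2 z2 = a^2 nu z0 + z1 = w z0 + z1 = 0. *)
have [t t0 wt] := Fp_nonzero_square (Fp_square_mul w0 w'0 nsq_w nsq_w') (mulf_neq0 w0 w'0).
have z2_t : z2 = t ^+ 2 * z0.
  by rewrite -wt /w /w' !(mulNr, mulrN) opprK [z1 / z0 * _]mulrC mulrA !divfK.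
have [s s0 nsq_nu] := Fp_nonsquare_sqrS; set nu := s ^+ 2 + 1 in nsq_nu.
have nu0 : nu != 0 by apply: contraNneq nsq_nu => ->; apply/existsP; exists 0; rewrite expr0n.
have [h h0 wh] := Fp_nonzero_square (Fp_square_mul w0 nu0 nsq_w nsq_nu) (mulf_neq0 w0 nu0).
have [a a0 w_a] : exists2 a, a != 0 & w = a ^+ 2 * nu.
  exists (h / nu); first by rewrite mulf_neq0 ?invr_eq0.
  by rewrite expr_div_n -wh expr2 invfM !mulrA mulfK ?divfK.
exists (a * s), 1, (a / t); split; rewrite ?oner_neq0 ?mulf_neq0 ?invr_eq0 //.
constructor 3; rewrite exprMn expr_div_n expr1n mul1r z2_t mulrA divfK ?expf_neq0 //.
by rewrite addrAC -mulrDl -{2}[a ^+ 2]mulr1 -mulrDr -w_a /w divfK ?addNr.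
Qed.

End Squares.

Lemma dvdn_Fp n : (p %| n) = ((n%:R : 'F_p) == 0)%R.
Proof. exact: dvdn_pcharf (pchar_Fp p_pr) n. Qed.

Lemma three_term_modp (z0 z1 z2 : nat) : ~~ (p %| z0) -> ~~ (p %| z1) -> ~~ (p %| z2) ->
  exists c0 c1 c2, [/\ ~~ (p %| c0), ~~ (p %| c1), ~~ (p %| c2) &
    [\/ p %| c0 ^ 2 * z0 + c1 ^ 2 * z1, p %| c1 ^ 2 * z1 + c2 ^ 2 * z2 |
        p %| c0 ^ 2 * z0 + c1 ^ 2 * z1 + c2 ^ 2 * z2]].
Proof.
rewrite !dvdn_Fp => z00 z10 z20.
have [c0 [c1 [c2 [c00 c10 c20 zs]]]] := Fp_three_term z00 z10 z20.
exists c0, c1, c2; rewrite !dvdn_Fp !natr_Zp !(natrD, natrM, natrX) !natr_Zp.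
by split=> //; case: zs => ->; rewrite eqxx; [constructor 1 | constructor 2 | constructor 3].
Qed.

Lemma linear_root_modp t u : ~~ (p %| u) -> exists r, p %| t + r * u.
Proof.
rewrite dvdn_Fp => u0; exists (- t%:R / u%:R : 'F_p)%R.
by rewrite dvdn_Fp natrD natrM natr_Zp divfK // addrN.
Qed.

End PrimeField.

Definition anisotropic (m N : nat) :=
  forall p, prime p -> p %| m -> forall x y, p %| x ^ 2 + N * y ^ 2 -> p %| y.

Lemma anisotropic_prime p : prime p -> odd p -> exists N, anisotropic p N.
Proof.
move=> p_pr p_odd; have [g g_prim] := Fp_prim_root p_pr.
exists (- g)%R => q q_pr; rewrite dvdn_prime2 // => /eqP-> x y.
rewrite !dvdn_Fp // !(natrD, natrX, natrM) natr_Zp mulNr subr_eq0.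
apply: contraTT => y0; apply/eqP => xy.
have := Fp_square_prim_exp p_pr p_odd g_prim 1.
rewrite expr1 => /negbT/existsPn/(_ (x%:R / y%:R)%R).
by rewrite expr_div_n xy mulfK ?expf_neq0 // eqxx.
Qed.

Lemma anisotropic_dvd d m N : d %| m -> anisotropic m N -> anisotropic d N.
Proof. by move=> dm aniso p p_pr pd; apply: aniso (dvdn_trans pd dm). Qed.

Lemma anisotropic_eqmod m N N' : N = N' %[mod m] -> anisotropic m N -> anisotropic m N'.
Proof.
move=> NN' aniso p p_pr pm x y.
have Np : N = N' %[mod p] by rewrite -(modn_dvdm N pm) -(modn_dvdm N' pm) NN'.
by rewrite /dvdn -modnDmr -modnMml -Np modnMml modnDmr; apply: aniso.
Qed.

Lemma anisotropic_mul m1 m2 N :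
  anisotropic m1 N -> anisotropic m2 N -> anisotropic (m1 * m2) N.
Proof. by move=> a1 a2 p p_pr; rewrite Euclid_dvdM // => /orP[]; [apply: a1 | apply: a2]. Qed.

Lemma anisotropic_exists m : odd m -> exists N, anisotropic m N.
Proof.
elim/ltn_ind: m => m IH m_odd; have [m_le1 | m_gt1] := leqP m 1.
  by exists 0 => p p_pr /(dvdn_leq (odd_gt0 m_odd)) p_le; move: (prime_gt1 p_pr); lia.
have p_pr := pdiv_prime m_gt1; set p := pdiv m in p_pr.
have p_odd := dvdn_odd (pdiv_dvd m) m_odd.
have m'_odd : odd (m %/ p) by apply: dvdn_odd m_odd; apply/dvdn_div/pdiv_dvd.
rewrite -(divnK (pdiv_dvd m)) -/p mulnC.
have [N' aniso'] := IH _ (ltn_Pdiv (prime_gt1 p_pr) (ltnW m_gt1)) m'_odd.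
have [p_m' | p_nm'] := boolP (p %| m %/ p).
  by exists N'; apply: anisotropic_mul (anisotropic_dvd p_m' aniso') aniso'.
have [Np anisop] := anisotropic_prime p_pr p_odd.
have co : coprime p (m %/ p) by rewrite prime_coprime.
exists (chinese p (m %/ p) Np N'); apply: anisotropic_mul.
  by apply: anisotropic_eqmod anisop; rewrite chinese_modl.
by apply: anisotropic_eqmod aniso'; rewrite chinese_modr.
Qed.

Lemma squarefree_dvd m X : 0 < m -> squarefree m ->
  (forall p, prime p -> p %| m -> p %| X) -> m %| X.
Proof.
move=> m_gt0 /forallP sqf dvdX; apply/dvdn_partP => // p.
rewrite mem_primes => /and3P[p_pr _ pm]; rewrite p_part.
have := sqf (Ordinal (leq_ltn_trans (dvdn_leq m_gt0 pm) (ltnSn m))).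
rewrite /= p_pr mulnn pfactor_dvdn // -ltnNge ltnS => log_le1.
exact: dvdn_trans (dvdn_exp2l p log_le1) (dvdX p p_pr pm).
Qed.

Lemma anisotropic_dvd_sqr m N x y : 0 < m -> squarefree m -> anisotropic m N ->
  m %| x ^ 2 + N * y ^ 2 -> (m %| x) /\ (m %| y).
Proof.
move=> m_gt0 sqf aniso dvd_m.
have my : m %| y.
  by apply: squarefree_dvd => // p p_pr pm; exact: aniso (dvdn_trans pm dvd_m).
split=> //; apply: squarefree_dvd => // p p_pr pm.
have py2 : p %| N * y ^ 2 by apply: dvdn_mull; rewrite Euclid_dvdX // (dvdn_trans pm my).
by have := dvdn_trans pm dvd_m; rewrite (dvdn_addl _ py2) Euclid_dvdX // => /andP[].
Qed.

Lemma sum_two_slots (U F : nat -> nat) N a b s e : a != b -> U a = 1 -> U b = N ->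
  (forall k, s <= k < e -> k != a -> k != b -> U k = 0) ->
  \sum_(s <= k < e) F k ^ 2 * U k =
    (if s <= a < e then F a else 0) ^ 2 + N * (if s <= b < e then F b else 0) ^ 2.
Proof.
move=> ab Ua Ub U0; rewrite (@eq_big_nat _ _ _ _ _ _
  (fun k => (if k == a then F a ^ 2 else 0) + (if k == b then N * F b ^ 2 else 0))).
  rewrite big_split -!big_mkcond !big_nat1_eq /=.
  by do 2 case: ifP => _; rewrite ?exp0n ?muln0.
move=> k sk; have [-> | ka] := eqVneq k a; first by rewrite (negbTE ab) Ua muln1 addn0.
by have [-> | kb] := eqVneq k b; rewrite ?Ub 1?mulnC ?U0 ?muln0.
Qed.

Lemma anisotropic_two_slots m N (U F : nat -> nat) a b s e :
  0 < m -> squarefree m -> anisotropic m N -> a != b -> U a = 1 -> U b = N ->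
  (forall k, s <= k < e -> k != a -> k != b -> U k = 0) -> (s <= a < e) || (s <= b < e) ->
  m %| \sum_(s <= k < e) F k ^ 2 * U k -> exists2 k, s <= k < e & m %| F k.
Proof.
move=> m_gt0 sqf aniso ab Ua Ub U0 ab_in; rewrite (sum_two_slots F ab Ua Ub U0).
case/(anisotropic_dvd_sqr m_gt0 sqf aniso) => ma mb.
case/orP: ab_in => [a_in | b_in]; first by exists a; rewrite ?a_in in ma.
by exists b; rewrite ?b_in in mb.
Qed.

Definition bad_unit (N k : nat) : nat := nth 0 [:: 0; 0; 1; 0; 0; N; 0; 0] k.
Definition bad_mult (N k : nat) : nat := nth 0 [:: 1; N; 0; 1; N; 0; 1; N] k.
Definition bad_weight (m N k : nat) : nat := bad_unit N k + m * bad_mult N k.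

Lemma bad_block_witness m N (F : nat -> nat) s e : 0 < m -> squarefree m -> anisotropic m N ->
  s < e <= 8 -> m ^ 2 %| \sum_(s <= k < e) F k ^ 2 * bad_weight m N k ->
  exists2 k, s <= k < e & m %| F k.
Proof.
move=> m_gt0 sqf aniso se.
rewrite (eq_bigr (fun k => F k ^ 2 * bad_unit N k + m * (F k ^ 2 * bad_mult N k))); last first.
  by move=> k _; rewrite /bad_weight; ring.
rewrite big_split -big_distrr /= => dvd_sum.
have unit0 k : k != 2 -> k != 5 -> bad_unit N k = 0.
  by rewrite /bad_unit; case: k => [|[|[|[|[|[|[|[|k]]]]]]]] // _ _; apply: nth_nil.
have [unit_in | unit_out] := boolP ((s <= 2 < e) || (s <= 5 < e)).
  apply: (@anisotropic_two_slots m N (bad_unit N) F 2 5) => // [k _|]; first exact: unit0.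
  have := dvdn_trans (dvdn_mulr _ (dvdnn m) : m %| m ^ 2) dvd_sum.
  by rewrite (dvdn_addl _ (dvdn_mulr _ (dvdnn m))).
have unit_sum0 : \sum_(s <= k < e) F k ^ 2 * bad_unit N k = 0.
  rewrite (@sum_two_slots (bad_unit N) F N 2 5 s e isT erefl erefl (fun k _ => unit0 k)).
  by move: unit_out; rewrite negb_or => /andP[/negbTE-> /negbTE->]; rewrite exp0n ?muln0.
move: dvd_sum; rewrite unit_sum0 add0n expnS expn1 dvdn_pmul2l // => dvd_sum.
(* a block avoiding positions 2 and 5 lies within the positions 3 j, 3 j + 1 *)
have [j [sj ej j2]] : exists j, [/\ 3 * j <= s, e <= 3 * j + 2 & j <= 2].
  exists (s %/ 3); move: unit_out se; rewrite negb_or !negb_and -!ltnNge => ? ?; split; lia.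
apply: (@anisotropic_two_slots m N (bad_mult N) F (3 * j) (3 * j + 1) s e) => //.
- by apply/eqP; lia.
- by case: j j2 {sj ej} => [|[|[|]]].
- by case: j j2 {sj ej} => [|[|[|]]].
- by move=> k ske ka kb; clear -sj ej ske ka kb; lia.
- by clear -se sj ej; lia.
Qed.

Lemma Zp_nat_eq0 n k : 1 < n -> ((k%:R : 'Z_n) == 0)%R = (n %| k).
Proof. by move=> n_gt1; rewrite -val_eqE /= val_Zp_nat. Qed.

Definition Zp_sqrt n (a : 'Z_n) : 'Z_n := odflt 0%R [pick x | a == x ^+ 2]%R.

Lemma Zp_sqrtK n (a : 'Z_n) : sqset n a -> (((Zp_sqrt a : nat) ^ 2)%:R = a)%R.
Proof.
rewrite /Zp_sqrt; case/existsP=> x ax; case: pickP => [y /eqP -> | /(_ x)]; last by rewrite ax.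
by rewrite natrX natr_Zp.
Qed.

Definition bad_seq m N : seq 'Z_(m ^ 2) := mkseq (fun k => (bad_weight m N k)%:R%R) 8.

Lemma bad_seq_no_zero_sum m N z : 1 < m -> squarefree m -> anisotropic m N ->
  infix z (bad_seq m N) -> ~ weighted_zero_sum (m ^ 2) (sqset_star (m ^ 2)) z.
Proof.
move=> m_gt1 sqf aniso /infixP[z1 [z2 bad_eq]] [z_gt0 [a [size_a [a_sq zs0]]]].
have m2_gt1 : 1 < m ^ 2 by rewrite (ltn_sqr 1).
set s := size z1; set l := size z in z_gt0 size_a zs0 *.
have sl8 : s + l <= 8 by move/(congr1 size): bad_eq; rewrite size_mkseq !size_cat => ->; lia.
have a_star i : i < l -> sqset_star (m ^ 2) (a`_i)%R.
  by move=> il; apply: (allP a_sq); rewrite mem_nth ?size_a.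
pose F i := (Zp_sqrt (a`_i)%R : nat).
have aF i : i < l -> (a`_i)%R = (F i ^ 2)%:R%R.
  by move=> il; rewrite /F Zp_sqrtK //; case/andP: (a_star i il).
have zw i : i < l -> (z`_i)%R = (bad_weight m N (s + i))%:R%R.
  move=> il; move/(congr1 (nth 0%R ^~ (s + i))): bad_eq.
  rewrite nth_mkseq ?(leq_trans _ sl8) ?ltn_add2l //.
  by rewrite nth_cat ltnNge leq_addr /= addKn nth_cat il => <-.
have : m ^ 2 %| \sum_(s <= k < s + l) F (k - s) ^ 2 * bad_weight m N k.
  rewrite -{1}(add0n s) big_addn addKn big_mkord -(Zp_nat_eq0 _ m2_gt1) natr_sum.
  apply/eqP/(etrans _ zs0).
  by apply: eq_bigr => i _; rewrite natrM addnK addnC -aF -?zw.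
case/(bad_block_witness (ltnW m_gt1) sqf aniso) => [|k kin mF]; first by lia.
have kl : k - s < l by lia.
have /andP[+ _] := a_star _ kl.
by rewrite (aF _ kl) Zp_nat_eq0 // dvdn_exp2r.
Qed.

Lemma first_not_within_three (P : pred nat) k : ~~ [&& P k, P k.+1 & P k.+2] ->
  exists k', [/\ k <= k' <= k.+2, ~~ P k' & forall j, k <= j < k' -> P j].
Proof.
have [Pk | nPk] := boolP (P k); last by exists k; split=> // [|j]; lia.
have [Pk1 | nPk1] := boolP (P k.+1).
  rewrite /= => nPk2; exists k.+2; split=> // [|j jk]; first by lia.
  by have [->|->] : j = k \/ j = k.+1 by lia.
by exists k.+1; split=> // [|j jk]; [lia | have -> : j = k by lia].
Qed.

Section UnitSquareZeroSums.
Variable p : nat.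
Hypothesis p_pr : prime p.
Hypothesis p_odd : odd p.

Definition unit_square_zero_sum (d : nat) (Y : nat -> nat) (s e : nat) :=
  exists C : nat -> nat, (forall k, s <= k < e -> ~~ (p %| C k)) /\
    d %| \sum_(s <= k < e) C k ^ 2 * Y k.

Lemma unit_square_zero_sum_single (Y : nat -> nat) k :
  p ^ 2 %| Y k -> unit_square_zero_sum (p ^ 2) Y k k.+1.
Proof.
move=> pY; exists (fun=> 1); rewrite big_nat1 exp1n mul1n.
by split=> // j _; rewrite dvdn1 neq_ltn prime_gt1 ?orbT.
Qed.

Lemma unit_square_zero_sum_scale (Y Z : nat -> nat) s e :
  (forall k, s <= k < e -> Y k = p * Z k) ->
  unit_square_zero_sum p Z s e -> unit_square_zero_sum (p ^ 2) Y s e.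
Proof.
move=> YZ [C [C_unit pZ]]; exists C; split=> //.
rewrite (eq_big_nat _ _ (F2 := fun k => p * (C k ^ 2 * Z k))); last first.
  by move=> k /YZ ->; rewrite mulnCA.
by rewrite -big_distrr expnS expn1 dvdn_pmul2l ?prime_gt0.
Qed.

Lemma unit_square_zero_sum_lift (Y : nat -> nat) s e u : s <= u < e -> ~~ (p %| Y u) ->
  unit_square_zero_sum p Y s e -> unit_square_zero_sum (p ^ 2) Y s e.
Proof.
move=> u_in Yu [C [C_unit]]; set S := \sum_(s <= k < e) _ => pS.
have p_gt0 := prime_gt0 p_pr.
have p2 : ~~ (p %| 2) by rewrite dvdn_prime2 //; apply: contraL p_odd => /eqP->.
have unit_u : ~~ (p %| 2 * C u * Y u).
  by rewrite !Euclid_dvdM // (negbTE p2) (negbTE (C_unit u u_in)) (negbTE Yu).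
have [r pr] := linear_root_modp p_pr (S %/ p) unit_u.
(* Hensel: replacing C u by C u + p r changes S by p (2 r C u Y u) modulo p^2 *)
exists (fun k => if k == u then C u + p * r else C k); split.
  by move=> k /C_unit; case: eqP => [-> | //]; rewrite dvdn_addl ?dvdn_mulr.
rewrite (eq_bigr (fun k => C k ^ 2 * Y k +
   (if k == u then (2 * C u * p * r + p ^ 2 * r ^ 2) * Y u else 0))); last first.
  by move=> k _; case: eqP => [-> | _]; [ring | rewrite addn0].
rewrite big_split /= -/S -big_mkcond /= big_nat1_eq u_in.
have -> : S + (2 * C u * p * r + p ^ 2 * r ^ 2) * Y u =
    p * (S %/ p + r * (2 * C u * Y u)) + p ^ 2 * (r ^ 2 * Y u).
  by rewrite {1}(divn_eq S p) (eqP pS) addn0; ring.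
apply: dvdn_add; first by rewrite expnS expn1 dvdn_pmul2l.
exact: dvdn_mulr.
Qed.

Lemma unit_square_zero_sum_support (Y C : nat -> nat) (Q : seq nat) s e :
  uniq Q -> {subset Q <= index_iota s e} ->
  (forall k, s <= k < e -> k \notin Q -> p %| Y k) -> (forall k, ~~ (p %| C k)) ->
  p %| \sum_(k <- Q) C k ^ 2 * Y k -> unit_square_zero_sum p Y s e.
Proof.
move=> Q_uniq Q_sub Y_off C_unit pQ; exists C; split=> [k _ | ]; first exact: C_unit.
rewrite (bigID (mem Q)) /= dvdn_add //; last first.
  by rewrite big_nat_cond dvdn_sum // => k /andP[k_in kQ]; rewrite dvdn_mull ?Y_off.
rewrite -big_filter (perm_big Q) //; apply: uniq_perm; rewrite ?filter_uniq ?iota_uniq //.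
by move=> k; rewrite mem_filter andb_idr //; apply: Q_sub.
Qed.

Lemma unit_square_zero_sum_three_units (Y : nat -> nat) q0 q1 q2 : q0 < q1 < q2 ->
  ~~ (p %| Y q0) -> ~~ (p %| Y q1) -> ~~ (p %| Y q2) ->
  (forall k, q0 < k < q2 -> k != q1 -> p %| Y k) ->
  exists s e, [/\ q0 <= s < e, e <= q2.+1, ~~ (p %| Y s) & unit_square_zero_sum p Y s e].
Proof.
move=> /andP[q01 q12] Y0 Y1 Y2 Y_off; have q02 := ltn_trans q01 q12.
have [q10 q20 q21] : [/\ q1 != q0, q2 != q0 & q2 != q1] by rewrite !neq_ltn q01 q12 q02 !orbT.
have [c0 [c1 [c2 [c00 c10 c20 zs]]]] := three_term_modp p_pr p_odd Y0 Y1 Y2.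
pose C k := if k == q0 then c0 else if k == q1 then c1 else if k == q2 then c2 else 1.
have C_unit k : ~~ (p %| C k).
  by rewrite /C; do !case: ifP => _ //; rewrite dvdn1 neq_ltn prime_gt1 ?orbT.
have [C0 C1 C2] : [/\ C q0 = c0, C q1 = c1 & C q2 = c2].
  by rewrite /C (negbTE q10) (negbTE q20) (negbTE q21) !eqxx.
case: zs => zs.
- exists q0, q1.+1; split=> //; try by clear -q01 q12; lia.
  apply: (unit_square_zero_sum_support (C := C) (Q := [:: q0; q1])) => //.
  + by rewrite /= inE eq_sym q10.
  + by move=> k; rewrite !inE mem_index_iota => /orP[] /eqP->; clear -q01; lia.
  + move=> k k_in; rewrite !inE negb_or => /andP[k0 k1]; apply: Y_off => //.
    by clear -k_in k0 q12; lia.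
  + by rewrite !big_cons big_nil addn0 C0 C1.
- exists q1, q2.+1; split=> //; try by clear -q01 q12; lia.
  apply: (unit_square_zero_sum_support (C := C) (Q := [:: q1; q2])) => //.
  + by rewrite /= inE eq_sym q21.
  + by move=> k; rewrite !inE mem_index_iota => /orP[] /eqP->; clear -q12; lia.
  + move=> k k_in; rewrite !inE negb_or => /andP[k1 k2]; apply: Y_off => //.
    by clear -k_in k1 k2 q01; lia.
  + by rewrite !big_cons big_nil addn0 C1 C2.
- exists q0, q2.+1; split=> //; try by clear -q01 q12; lia.
  apply: (unit_square_zero_sum_support (C := C) (Q := [:: q0; q1; q2])) => //.
  + by rewrite /= !inE negb_or !(eq_sym q0) q10 q20 eq_sym q21.
  + by move=> k; rewrite !inE mem_index_iota => /or3P[] /eqP->; clear -q01 q12; lia.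
  + move=> k k_in; rewrite !inE !negb_or => /and3P[k0 k1 k2]; apply: Y_off => //.
    by clear -k_in k0 k2; lia.
  + by rewrite !big_cons big_nil addn0 C0 C1 C2 addnA.
Qed.

Lemma unit_square_zero_sum_nine (Y : nat -> nat) :
  exists s e, s < e <= 9 /\ unit_square_zero_sum (p ^ 2) Y s e.
Proof.
have [/existsP[[k k7] /and3P[Yk Yk1 Yk2]] | no3] :=
  boolP [exists k : 'I_7, [&& p %| Y k, p %| Y k.+1 & p %| Y k.+2]].
  pose Z j := Y j %/ p.
  have YZ j : p %| Y j -> Y j = p * Z j by move=> pY; rewrite mulnC divnK.
  have single j : j < 9 -> p %| Y j -> p %| Z j ->
      exists s e, s < e <= 9 /\ unit_square_zero_sum (p ^ 2) Y s e.
    move=> j9 pY pZ; exists j, j.+1; rewrite ltnSn j9; split=> //.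
    by apply: unit_square_zero_sum_single; rewrite YZ // expnS expn1 dvdn_pmul2l ?prime_gt0.
  have [k_lt k1_lt k2_lt] : [/\ k < 9, k.+1 < 9 & k.+2 < 9] by clear -k7; split; lia.
  have [pZ|Zk] := boolP (p %| Z k); first exact: single k_lt Yk pZ.
  have [pZ|Zk1] := boolP (p %| Z k.+1); first exact: single k1_lt Yk1 pZ.
  have [pZ|Zk2] := boolP (p %| Z k.+2); first exact: single k2_lt Yk2 pZ.
  have k012 : k < k.+1 < k.+2 by rewrite !ltnSn.
  have no_gap j : k < j < k.+2 -> j != k.+1 -> p %| Z j by clear -j; lia.
  have [s [e [se e_le _ pZ]]] := unit_square_zero_sum_three_units k012 Zk Zk1 Zk2 no_gap.
  exists s, e; split; first by clear -se e_le k7; lia.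
  apply: unit_square_zero_sum_scale pZ => j j_in; apply: YZ.
  by have [->|[->|->]] : j = k \/ j = k.+1 \/ j = k.+2 by clear -se e_le j_in; lia.
have no3' k : k < 7 -> ~~ [&& p %| Y k, p %| Y k.+1 & p %| Y k.+2].
  by move=> k7; move/existsPn: no3 => /(_ (Ordinal k7)).
(* otherwise the first three non-multiples of p are at most three apart *)
pose P j := p %| Y j.
have [q0 [q0_le Y0 _]] := first_not_within_three (P := P) (no3' 0 isT).
have [q1 [q1_le Y1 gap1]] :=
  first_not_within_three (P := P) (no3' q0.+1 ltac:(clear -q0_le; lia)).
have [q2 [q2_le Y2 gap2]] :=
  first_not_within_three (P := P) (no3' q1.+1 ltac:(clear -q0_le q1_le; lia)).
have q012 : q0 < q1 < q2 by clear -q1_le q2_le; lia.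
have gaps j : q0 < j < q2 -> j != q1 -> p %| Y j.
  move=> j_in j_q1; have [j_lt | j_gt] := ltnP j q1.
    by apply: gap1; clear -j_in j_lt; lia.
  by apply: gap2; clear -j_in j_gt j_q1; lia.
have [s [e [se e_le Ys pY]]] := unit_square_zero_sum_three_units q012 Y0 Y1 Y2 gaps.
exists s, e; split; first by clear -se e_le q0_le q1_le q2_le; lia.
by apply: unit_square_zero_sum_lift Ys pY; clear -se; lia.
Qed.

End UnitSquareZeroSums.

Lemma weighted_zero_sum_of_unit_square p m (y : seq 'Z_(m ^ 2)) s e :
  prime p -> p %| m -> 1 < m -> s < e <= size y ->
  unit_square_zero_sum p (p ^ 2) (fun k => nth 0%R y k : nat) s e ->
  exists z, infix z y /\ weighted_zero_sum (m ^ 2) (sqset_star (m ^ 2)) z.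
Proof.
move=> p_pr pm m_gt1 se [C [C_unit pC]].
have m2_gt1 : 1 < m ^ 2 by rewrite (ltn_sqr 1).
set l := e - s; set m' := m %/ p.
have m_eq : m = p * m' by rewrite mulnC divnK.
have m'_gt0 : 0 < m' by rewrite divn_gt0 ?prime_gt0 // dvdn_leq // ltnW.
have size_z : size (take l (drop s y)) = l by rewrite size_takel // size_drop; lia.
pose a k : 'Z_(m ^ 2) := ((m' * C k) ^ 2)%:R%R.
exists (take l (drop s y)); split.
  by apply/infixP; exists (take s y), (drop l (drop s y)); rewrite !cat_take_drop.
split; first by rewrite size_z; lia.
exists (mkseq (fun i => a (i + s)) l); split; first by rewrite size_mkseq size_z.
split.
  apply/allP => w /mapP[i]; rewrite mem_iota => /andP[_ il] ->; apply/andP; split.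
    by rewrite Zp_nat_eq0 // dvdn_pexp2r // m_eq mulnC dvdn_pmul2l // C_unit //; lia.
  by apply/existsP; exists ((m' * C (i + s))%:R)%R; rewrite /a natrX.
move: pC; rewrite -{1}(add0n s) big_addn big_mkord -/l => pC.
rewrite size_z (eq_bigr (fun i : 'I_l => ((m' * C (i + s)) ^ 2 * nth 0%R y (i + s))%N%:R%R)).
  apply/eqP; rewrite -natr_sum Zp_nat_eq0 //.
  suff : p ^ 2 * m' ^ 2 %| \sum_(i < l) (m' * C (i + s)) ^ 2 * nth 0%R y (i + s).
    by rewrite -expnMn -m_eq.
  rewrite mulnC.
  rewrite (eq_bigr (fun i : 'I_l => m' ^ 2 * (C (i + s) ^ 2 * nth 0%R y (i + s)))); last first.
    by move=> i _; rewrite expnMn mulnA.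
  by rewrite -big_distrr dvdn_pmul2l ?expn_gt0 ?m'_gt0.
by move=> i _; rewrite nth_mkseq // nth_take // nth_drop addnC natrM natr_Zp.
Qed.

Lemma C_property_nine m : 1 < m -> odd m -> C_property (m ^ 2) (sqset_star (m ^ 2)) 9.
Proof.
move=> m_gt1 m_odd y size_y; have p_pr := pdiv_prime m_gt1; have pm := pdiv_dvd m.
have [s [e [se zs]]] :=
  unit_square_zero_sum_nine p_pr (dvdn_odd pm m_odd) (fun k => nth 0%R y k : nat).
by apply: (weighted_zero_sum_of_unit_square p_pr pm m_gt1 _ zs); rewrite size_y.
Qed.

Theorem mainTheorem20 (m : nat) :
  (1 < m)%N -> odd m -> squarefree m ->
  is_C_constant (m ^ 2) (sqset_star (m ^ 2)) 9.
Proof.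
move=> m_gt1 m_odd sqf; split=> //; split; first exact: C_property_nine.
move=> t t_gt0 t_lt9 Ct; have [N aniso] := anisotropic_exists m_odd.
have [|z [zt zs]] := Ct (take t (bad_seq m N)); first by rewrite size_takel // size_mkseq; lia.
exact: bad_seq_no_zero_sum m_gt1 sqf aniso (infix_trans zt (infix_take _ _)) zs.
Qed.
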